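(* Let $e_1\oplus e_2$ be a subexpression of the clique-width $k$-expression $e_G$ and let $C,N\in[0,\mathcal{N}]^{k\times q}$. Let $N_1\in[0,\mathcal{N}]^{k\times q}$ be defined by $N_1[i,a]=0$ for every $i\in\overline{\ell(e_1)}$ and every color $a$, and $N_1[i,a]=N[i,a]$ for every $i\notin\overline{\ell(e_1)}$ and every color $a$; define $N_2$ analogously with respect to $e_2$. Then $\lambda(e_1\oplus e_2,C,N)$ equals the minimum of $\lambda(e_1,C_1,N_1)\circledast\lambda(e_2,C_2,N_2)$ over all $C_1,C_2\in[0,\mathcal{N}]^{k\times q}$ such that $C_1[i,a]=0$ for all $i\in\overline{\ell(e_1)}$ and all $a$, $C_2[i,a]=0$ for all $i\in\overline{\ell(e_2)}$ and all $a$, and $C[i,a]=\min(\mathcal{N},C_1[i,a]+C_2[i,a])$ for all $i\in[1,k]$ and all $a\in\mathrm{Colors}$.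
   Context: Weight set: $(\mathrm{Weights},\preceq,\circledast)$ where $\preceq$ is a total order with a maximum element $\mathrm{Error}$, $\min$ is the minimum w.r.t. $\preceq$ (minimum of an empty set is $\mathrm{Error}$), and $\circledast$ is commutative, associative, has a neutral element, has absorbing element $\mathrm{Error}$, and satisfies $s_1\preceq s_2\Rightarrow s_1\circledast s_3\preceq s_2\circledast s_3$. A color-counting 1-locally checkable problem is given by a graph $G$, colors $\mathrm{Colors}=\{a_1,\ldots,a_q\}$, nonempty lists $L_v\subseteq\mathrm{Colors}$, weights $w_{v,a}\in\mathrm{Weights}\setminus\{\mathrm{Error}\}$ ($a\in L_v$), and a function $check(v,a,n_1,\ldots,n_q)\in\{\mathrm{True},\mathrm{False}\}$. $\mathcal{N}\in[1,|V(G)|]$ is an integer with $check(v,a,n_1,\ldots,n_q)=check(v,a,\min(\mathcal{N},n_1),\ldots,\min(\mathcal{N},n_q))$ always. $[x,y]=\{x,\ldots,y\}$. $e_G$ is an irredundant clique-width $k$-expression of $G$ (operations $i(v)$, $\oplus$, $\eta_{i,j}$, $\rho_{i\to j}$; irredundant means no join adds an already existing edge), in which every relabeling $\rho_{i\to j}(e)$ has some vertex of $G_e$ of label $j$. For a subexpression $e$, $G_e$ is its labeled graph, $\ell_e(v)$ the label of $v$ in $G_e$, and $\overline{\ell(e)}$ the set of labels in $[1,k]$ carried by no vertex of $G_e$. For $C,N\in[0,\mathcal{N}]^{k\times q}$ (rows = labels, columns = colors), a coloring $c$ of $G_e$ with $c(v)\in L_v$ for all $v$ is a $(C,N)$-coloring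 of $G_e$ if (C1) $\min(\mathcal{N},|\{v\in V(G_e): c(v)=a,\ \ell_e(v)=i\}|)=C[i,a]$ for all $i,a$; and (C2) for all $v\in V(G_e)$, $check(v,c(v),n_1,\ldots,n_q)$ holds with $n_j=\min(\mathcal{N},N[\ell_e(v),a_j]+|\{u\in N_{G_e}(v):c(u)=a_j\}|)$. $\lambda(e,C,N)$ is the minimum of $\circledast_{v\in V(G_e)}w_{v,c(v)}$ over all $(C,N)$-colorings $c$ of $G_e$ ($\mathrm{Error}$ if none). *)

From HB Require Import structures.
From mathcomp Require Import all_boot all_order.
Set Implicit Arguments. Unset Strict Implicit. Unset Printing Implicit Defensive.
Import Order.TTheory.
Local Open Scope order_scope.

(* (Weights, <=, op): W is a totally ordered type with a top element \top,
   which plays the role of Error. *)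
Record weight_struct (d : Order.disp_t) (W : tOrderType d) := WeightStruct {
  wop : W -> W -> W;
  wid : W;
  wopC : commutative wop;
  wopA : associative wop;
  wop1 : left_id wid wop;
  wopT : left_zero \top wop;
  wop_le : forall s1 s2 s3 : W, s1 <= s2 -> wop s1 s3 <= wop s2 s3
}.

Inductive cwexpr (k : nat) (V : Type) :=
| CVert of 'I_k & V
| CUnion of cwexpr k V & cwexpr k V
| CJoin of 'I_k & 'I_k & cwexpr k V
| CRelab of 'I_k & 'I_k & cwexpr k V.

Section CW.
Variables (k : nat) (V : eqType).
Implicit Types e : cwexpr k V.

Fixpoint verts e : seq V :=
  match e with
  | CVert _ v => [:: v]
  | CUnion e1 e2 => verts e1 ++ verts e2
  | CJoin _ _ e' => verts e'
  | CRelab _ _ e' => verts e'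
  end.

(* label l_e(v) of a vertex v of G_e (meaningless for v outside G_e) *)
Fixpoint lab e (u : V) : 'I_k :=
  match e with
  | CVert i _ => i
  | CUnion e1 e2 => if u \in verts e1 then lab e1 u else lab e2 u
  | CJoin _ _ e' => lab e' u
  | CRelab i j e' => if lab e' u == i then j else lab e' u
  end.

Fixpoint edge e (u v : V) : bool :=
  match e with
  | CVert _ _ => false
  | CUnion e1 e2 => edge e1 u v || edge e2 u v
  | CJoin i j e' =>
      edge e' u v ||
      [&& u \in verts e', v \in verts e' &
          ((lab e' u == i) && (lab e' v == j)) ||
          ((lab e' u == j) && (lab e' v == i))]
  | CRelab _ _ e' => edge e' u v
  end.

(* \overline{l(e)} : labels carried by no vertex of G_e *)
Definition absent_labels e : pred 'I_k :=
  [pred i | all (fun v => lab e v != i) (verts e)].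

Fixpoint subexpr (f e : cwexpr k V) : Prop :=
  f = e \/
  match e with
  | CVert _ _ => False
  | CUnion e1 e2 => subexpr f e1 \/ subexpr f e2
  | CJoin _ _ e' => subexpr f e'
  | CRelab _ _ e' => subexpr f e'
  end.

Definition node_ok (f : cwexpr k V) : Prop :=
  match f with
  | CJoin i j e' =>
      i != j /\
      (forall u v, u \in verts e' -> v \in verts e' ->
         lab e' u = i -> lab e' v = j -> ~~ edge e' u v)
  | CRelab i j e' => exists2 v, v \in verts e' & lab e' v = j
  | _ => True
  end.
End CW.

(* e is an irredundant clique-width k-expression of the graph G whose
   vertex set is the finite type V (G is then the graph G_e) in which every
   relabeling rho_{i->j}(e') has a vertex of label j in G_{e'} *)
Definition good_expr (k : nat) (V : finType) (e : cwexpr k V) : Prop :=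
  uniq (verts e) /\ (forall v : V, v \in verts e) /\
  (forall f, subexpr f e -> node_ok f).

Definition cmat (k q Nn : nat) := {ffun 'I_k * 'I_q -> 'I_Nn.+1}.

Section Lambda.
Variables (k q Nn : nat) (V : finType).
Variables (L : V -> {set 'I_q})
          (check : V -> 'I_q -> ('I_q -> nat) -> bool).

Definition is_CN_coloring (e : cwexpr k V) (C N : cmat k q Nn)
    (c : {ffun V -> 'I_q}) : bool :=
  [&& all (fun v => c v \in L v) (verts e),
      [forall i : 'I_k, forall a : 'I_q,
         (C (i, a) : nat) ==
         minn Nn (count (fun v => (c v == a) && (lab e v == i)) (verts e))] &
      all (fun v => check v (c v)
             (fun a => minn Nn (N (lab e v, a) +
                 count (fun u => edge e v u && (c u == a)) (verts e))))
          (verts e)].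

Variables (d : Order.disp_t) (W : tOrderType d) (ws : weight_struct W)
          (w : V -> 'I_q -> W).

Definition col_weight (e : cwexpr k V) (c : {ffun V -> 'I_q}) : W :=
  \big[(wop ws)/(wid ws)]_(v <- verts e) w v (c v).

(* lambda(e, C, N); colorings are represented by total functions on V,
   only their restriction to V(G_e) matters. *)
Definition lambda (e : cwexpr k V) (C N : cmat k q Nn) : W :=
  \big[Order.min/(\top)]_(c : {ffun V -> 'I_q} | is_CN_coloring e C N c)
     col_weight e c.
End Lambda.

Definition restrict_mat (k q Nn : nat) (V : eqType) (e : cwexpr k V)
    (N : cmat k q Nn) : cmat k q Nn :=
  [ffun p => if p.1 \in absent_labels e then ord0 else N p].

(* A coloring of G_(e1 (+) e2) is the same thing as a pair of colorings of
   G_e1 and G_e2: the vertex sets are disjoint and no edge joins them, so a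
   vertex of G_e1 has the same label and the same neighbours in G_e1 and in
   G_(e1 (+) e2).  The check of such a vertex only reads the row of N of its
   own label, which is present in e1, so N may be replaced by N1.  The color
   counts add up and saturate at Nn, the weights multiply, and the minima
   combine because the weight product is monotone. *)

From HB Require Import structures.
From mathcomp Require Import all_boot all_order zify.
From Stdlib Require Import FunctionalExtensionality.
Import Order.TTheory.
Local Open Scope order_scope.
Set Implicit Arguments. Unset Strict Implicit.

Lemma minn_minnD n x y : minn n (minn n x + minn n y) = minn n (x + y).
Proof. lia. Qed.

Section Expressions.
Variables (k : nat) (V : eqType).
Implicit Types (e : cwexpr k V) (u v : V).

Lemma edge_verts e u v : edge e u v -> (u \in verts e) && (v \in verts e).
Proof.
elim: e u v => [i x|e1 IH1 e2 IH2|i j e IH|i j e IH] u v //=.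
- by case/orP => [/IH1|/IH2] /andP[Hu Hv]; rewrite !mem_cat ?Hu ?Hv ?orbT.
- by case/orP => [/IH //|/and3P[-> -> _]].
- exact: IH.
Qed.

Lemma count_edge_notin e v (P : pred V) :
  v \notin verts e -> count (fun u => edge e v u && P u) (verts e) = 0%N.
Proof.
move=> /negPf vNe; apply/eqP; rewrite -leqn0 leqNgt -has_count.
by apply/hasPn => u _; apply/negP => /andP[/edge_verts]; rewrite vNe.
Qed.

Lemma subexpr_uniq f e : subexpr f e -> uniq (verts e) -> uniq (verts f).
Proof.
elim: e => [i x|e1 IH1 e2 IH2|i j e IH|i j e IH] /=.
- by case=> // ->.
- case=> [-> //|[/IH1 H|/IH2 H]]; rewrite cat_uniq => /and3P[u1 _ u2]; auto.
- by case=> [-> //|/IH].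
- by case=> [-> //|/IH].
Qed.

Lemma lab_notin_absent e v : v \in verts e -> lab e v \notin absent_labels e.
Proof. by move=> ve; rewrite inE; apply/allPn; exists v; rewrite ?eqxx. Qed.

Lemma restrict_mat_lab q Nn e (N : cmat k q Nn) v a :
  v \in verts e -> restrict_mat e N (lab e v, a) = N (lab e v, a).
Proof. by move=> ve; rewrite ffunE /= (negPf (lab_notin_absent ve)). Qed.

Section Union.
Variables e1 e2 : cwexpr k V.
Hypothesis uniq_e12 : uniq (verts e1 ++ verts e2).

Lemma notin_verts_r v : v \in verts e1 -> v \notin verts e2.
Proof.
move=> v1; apply/negP => v2; move: uniq_e12; rewrite cat_uniq => /and3P[_ /hasPn].
by move=> /(_ v v2); rewrite v1.
Qed.

Lemma notin_verts_l v : v \in verts e2 -> v \notin verts e1.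
Proof. by move=> v2; apply/negP => /notin_verts_r; rewrite v2. Qed.

Lemma lab_union_r v : v \in verts e2 -> lab (CUnion e1 e2) v = lab e2 v.
Proof. by move=> /notin_verts_l /negPf /= ->. Qed.

Lemma count_lab_union (P : pred V) i :
  count (fun v => P v && (lab (CUnion e1 e2) v == i)) (verts e1 ++ verts e2) =
  (count (fun v => P v && (lab e1 v == i)) (verts e1) +
   count (fun v => P v && (lab e2 v == i)) (verts e2))%N.
Proof.
rewrite count_cat; congr (_ + _)%N; apply: eq_in_count => v ve /=.
  by rewrite ve.
by rewrite (negPf (notin_verts_l ve)).
Qed.

Lemma count_edge_union v (P : pred V) :
  count (fun u => edge (CUnion e1 e2) v u && P u) (verts e1 ++ verts e2) =
  (count (fun u => edge e1 v u && P u) (verts e1) +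
   count (fun u => edge e2 v u && P u) (verts e2))%N.
Proof.
rewrite count_cat; congr (_ + _)%N; apply: eq_in_count => u ue /=.
  suff /negPf-> : ~~ edge e2 v u by rewrite orbF.
  by apply/negP => /edge_verts/andP[_]; apply/negP/notin_verts_r.
suff /negPf-> : ~~ edge e1 v u by [].
by apply/negP => /edge_verts/andP[_]; apply/negP/notin_verts_l.
Qed.
End Union.
End Expressions.

Section Colorings.
Variables (k q Nn : nat) (V : finType).
Variables (L : V -> {set 'I_q}) (check : V -> 'I_q -> ('I_q -> nat) -> bool).
Implicit Types (e : cwexpr k V) (c : {ffun V -> 'I_q}) (C N : cmat k q Nn).

Definition count_mat e c : cmat k q Nn :=
  [ffun p => inord (minn Nn (count (fun v => (c v == p.2) && (lab e v == p.1)) (verts e)))].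

Definition check_at e N c v :=
  check v (c v) (fun a => minn Nn (N (lab e v, a) +
                   count (fun u => edge e v u && (c u == a)) (verts e))).

Lemma count_matE e c i a :
  count_mat e c (i, a) = minn Nn (count (fun v => (c v == a) && (lab e v == i)) (verts e))
    :> nat.
Proof. by rewrite ffunE inordK // ltnS geq_minl. Qed.

Lemma eq_cmatE C C' : (C == C') = [forall i, forall a, (C (i, a) : nat) == C' (i, a)].
Proof.
apply/eqP/'forall_'forall_eqP => [-> //|eqC].
by apply/ffunP => -[i a]; apply/val_inj/eqC.
Qed.

Lemma count_mat_absent e c i a : i \in absent_labels e -> count_mat e c (i, a) = 0 :> nat.
Proof.
rewrite inE => /allP iNe; rewrite count_matE (eq_in_count (a2 := pred0)) ?count_pred0 //.
by move=> v ve /=; rewrite (negPf (iNe v ve)) andbF.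
Qed.

Lemma is_CN_coloringE e C N c :
  is_CN_coloring L check e C N c =
  [&& all (fun v => c v \in L v) (verts e), C == count_mat e c &
      all (check_at e N c) (verts e)].
Proof.
rewrite /is_CN_coloring eq_cmatE; congr [&& _, _ & _].
by apply: eq_forallb => i; apply: eq_forallb => a; rewrite count_matE.
Qed.

Lemma is_CN_coloring_count_mat e C N c :
  is_CN_coloring L check e C N c -> C = count_mat e c.
Proof. by rewrite is_CN_coloringE => /and3P[_ /eqP]. Qed.

Lemma is_CN_coloring_eq_in e C N c c' : {in verts e, c =1 c'} ->
  is_CN_coloring L check e C N c = is_CN_coloring L check e C N c'.
Proof.
move=> cc'; rewrite !is_CN_coloringE; have -> : count_mat e c = count_mat e c'.
  apply/ffunP => -[i a]; rewrite !ffunE; congr (inord (minn _ _)).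
  by apply: eq_in_count => v ve; rewrite cc'.
congr [&& _, _ & _].
- by apply: eq_in_all => v ve; rewrite cc'.
- apply: eq_in_all => v ve; rewrite /check_at cc' //; congr (check _ _ _).
  apply: functional_extensionality => a; congr (minn _ (_ + _)).
  by apply: eq_in_count => u ue; rewrite cc'.
Qed.

Section Union.
Variables e1 e2 : cwexpr k V.
Hypothesis uniq_e12 : uniq (verts e1 ++ verts e2).

Lemma count_mat_union c i a :
  count_mat (CUnion e1 e2) c (i, a) =
  minn Nn (count_mat e1 c (i, a) + count_mat e2 c (i, a)) :> nat.
Proof.
by rewrite !count_matE [verts _]/= count_lab_union // minn_minnD.
Qed.

Lemma check_at_union_l N c v : v \in verts e1 ->
  check_at (CUnion e1 e2) N c v = check_at e1 (restrict_mat e1 N) c v.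
Proof.
move=> ve; rewrite /check_at /= ve; congr (check _ _ _).
apply: functional_extensionality => a.
rewrite restrict_mat_lab // count_edge_union //.
by rewrite (count_edge_notin _ (notin_verts_r uniq_e12 ve)) addn0.
Qed.

Lemma check_at_union_r N c v : v \in verts e2 ->
  check_at (CUnion e1 e2) N c v = check_at e2 (restrict_mat e2 N) c v.
Proof.
move=> ve; rewrite /check_at lab_union_r //=; congr (check _ _ _).
apply: functional_extensionality => a.
rewrite restrict_mat_lab // count_edge_union //.
by rewrite (count_edge_notin _ (notin_verts_l uniq_e12 ve)).
Qed.

Lemma is_CN_coloring_union C N c :
  is_CN_coloring L check (CUnion e1 e2) C N c =
  [&& is_CN_coloring L check e1 (count_mat e1 c) (restrict_mat e1 N) c,
      is_CN_coloring L check e2 (count_mat e2 c) (restrict_mat e2 N) c &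
      [forall i, forall a, (C (i, a) : nat) ==
                           minn Nn (count_mat e1 c (i, a) + count_mat e2 c (i, a))]].
Proof.
rewrite !is_CN_coloringE /= !all_cat !eqxx eq_cmatE.
rewrite (eq_in_all (check_at_union_l N c)) (eq_in_all (check_at_union_r N c)).
under eq_forallb => i do under eq_forallb => a do rewrite count_mat_union.
have shuffle (a1 a2 b1 b2 f : bool) :
  [&& a1 && a2, f, b1 & b2] = [&& [&& a1, true & b1], [&& a2, true & b2] & f].
  by case: a1 a2 b1 b2 f => [] [] [] [] [].
exact: shuffle.
Qed.
End Union.
End Colorings.

Section Weights.
Variables (d : Order.disp_t) (W : tOrderType d) (ws : weight_struct W).

HB.instance Definition _ :=
  Monoid.isComLaw.Build W (wid ws) (wop ws) (wopA ws) (wopC ws) (wop1 ws).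

Lemma wop_le2 (x x' y y' : W) : x <= x' -> y <= y' -> wop ws x y <= wop ws x' y'.
Proof.
move=> le_x le_y; apply: le_trans (wop_le ws y le_x) _.
by rewrite !(wopC ws x'); apply: wop_le.
Qed.

Lemma wop_bigminl (I : finType) (P : pred I) (F : I -> W) y :
  wop ws (\big[Order.min/(\top)]_(i | P i) F i) y =
  \big[Order.min/(\top)]_(i | P i) wop ws (F i) y.
Proof.
apply: (big_morph (wop ws ^~ y)) => [x x'|]; last exact: wopT.
by case: (leP x x') => [/(wop_le ws y)/min_idPl|/ltW/(wop_le ws y)/min_idPr].
Qed.

Lemma wop_bigminr (I : finType) (P : pred I) (F : I -> W) x :
  wop ws x (\big[Order.min/(\top)]_(i | P i) F i) =
  \big[Order.min/(\top)]_(i | P i) wop ws x (F i).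
Proof. by rewrite wopC wop_bigminl; under eq_bigr do rewrite wopC. Qed.

Variables (k q Nn : nat) (V : finType).
Variables (L : V -> {set 'I_q}) (check : V -> 'I_q -> ('I_q -> nat) -> bool)
          (w : V -> 'I_q -> W).
Implicit Types (e : cwexpr k V) (c : {ffun V -> 'I_q}) (C N : cmat k q Nn).

Lemma eq_in_col_weight e c c' : {in verts e, c =1 c'} ->
  col_weight ws w e c = col_weight ws w e c'.
Proof. by move=> cc'; apply: eq_big_seq => v /cc' ->. Qed.

Section Union.
Variables e1 e2 : cwexpr k V.
Hypothesis uniq_e12 : uniq (verts e1 ++ verts e2).

Definition split_admissible C (CC : cmat k q Nn * cmat k q Nn) : bool :=
  [forall i : 'I_k, (i \in absent_labels e1) ==>
                    [forall a : 'I_q, (CC.1 (i, a) : nat) == 0%N]] &&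
  [forall i : 'I_k, (i \in absent_labels e2) ==>
                    [forall a : 'I_q, (CC.2 (i, a) : nat) == 0%N]] &&
  [forall i : 'I_k, forall a : 'I_q,
     (C (i, a) : nat) == minn Nn (CC.1 (i, a) + CC.2 (i, a))].

Lemma col_weight_union c :
  col_weight ws w (CUnion e1 e2) c = wop ws (col_weight ws w e1 c) (col_weight ws w e2 c).
Proof. exact: big_cat. Qed.

Lemma lambda_union_le C N C1 C2 :
  [forall i, forall a, (C (i, a) : nat) == minn Nn (C1 (i, a) + C2 (i, a))] ->
  lambda L check ws w (CUnion e1 e2) C N <=
  wop ws (lambda L check ws w e1 C1 (restrict_mat e1 N))
         (lambda L check ws w e2 C2 (restrict_mat e2 N)).
Proof.
move=> sumC; rewrite /lambda wop_bigminl.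
apply: le_bigmin => [|c1 col1]; first exact: lex1.
rewrite wop_bigminr; apply: le_bigmin => [|c2 col2]; first exact: lex1.
pose c := [ffun v => if v \in verts e1 then c1 v else c2 v].
have cc1 : {in verts e1, c =1 c1} by move=> v ve; rewrite ffunE ve.
have cc2 : {in verts e2, c =1 c2}.
  by move=> v ve; rewrite ffunE (negPf (notin_verts_l uniq_e12 ve)).
rewrite -(eq_in_col_weight cc1) -(eq_in_col_weight cc2) -col_weight_union.
apply: bigmin_le_cond; rewrite is_CN_coloring_union //.
rewrite -(is_CN_coloring_eq_in _ _ _ _ cc1) in col1.
rewrite -(is_CN_coloring_eq_in _ _ _ _ cc2) in col2.
by rewrite -(is_CN_coloring_count_mat col1) -(is_CN_coloring_count_mat col2) col1 col2.
Qed.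

Lemma bigmin_split_le_lambda_union C N :
  \big[Order.min/(\top)]_(CC | split_admissible C CC)
     wop ws (lambda L check ws w e1 CC.1 (restrict_mat e1 N))
            (lambda L check ws w e2 CC.2 (restrict_mat e2 N)) <=
  lambda L check ws w (CUnion e1 e2) C N.
Proof.
rewrite [X in _ <= X]/lambda; apply: le_bigmin => [|c colc]; first exact: lex1.
rewrite is_CN_coloring_union // in colc; case/and3P: colc => col1 col2 sumC.
have adm : split_admissible C (count_mat Nn e1 c, count_mat Nn e2 c).
  rewrite /split_admissible /= sumC andbT.
  by apply/andP; split; apply/forallP => i; apply/implyP => absent;
     apply/forallP => a; rewrite count_mat_absent.
apply: le_trans (bigmin_le_cond _ _ adm) _.
by rewrite col_weight_union; apply: wop_le2; apply: bigmin_le_cond.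
Qed.
End Union.
End Weights.

Theorem lemma3
  (d : Order.disp_t) (W : tOrderType d) (ws : weight_struct W)
  (k q : nat) (V : finType)
  (L : V -> {set 'I_q}) (w : V -> 'I_q -> W)
  (check : V -> 'I_q -> ('I_q -> nat) -> bool) (Nn : nat)
  (eG : cwexpr k V) (e1 e2 : cwexpr k V) (C N : cmat k q Nn) :
  good_expr eG ->
  (forall v, L v != set0) ->
  (forall v a, a \in L v -> w v a != \top) ->
  (1 <= Nn <= #|V|)%N ->
  (forall v a (n : 'I_q -> nat),
      check v a n = check v a (fun j => minn Nn (n j))) ->
  subexpr (CUnion e1 e2) eG ->
  lambda L check ws w (CUnion e1 e2) C N =
  \big[Order.min/(\top)]_(CC : cmat k q Nn * cmat k q Nn |
        [forall i : 'I_k, (i \in absent_labels e1) ==>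
                          [forall a : 'I_q, (CC.1 (i, a) : nat) == 0%N]] &&
        [forall i : 'I_k, (i \in absent_labels e2) ==>
                          [forall a : 'I_q, (CC.2 (i, a) : nat) == 0%N]] &&
        [forall i : 'I_k, forall a : 'I_q,
           (C (i, a) : nat) == minn Nn (CC.1 (i, a) + CC.2 (i, a))])
    wop ws (lambda L check ws w e1 CC.1 (restrict_mat e1 N))
           (lambda L check ws w e2 CC.2 (restrict_mat e2 N)).
Proof.
move=> [uniq_eG _] _ _ _ _ sub_e12.
have uniq_e12 := subexpr_uniq sub_e12 uniq_eG.
apply: le_anti; rewrite bigmin_split_le_lambda_union // andbT.
apply: le_bigmin => [|[C1 C2] /andP[_ sumC]]; first exact: lex1.
exact: lambda_union_le.
Qed.
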